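(* Let $t\ge1$ and $n=t+1$. The gadget $\mathtt{SecMultSub}$ defined below is $t$-NI secure. $\mathtt{SecMultSub}$ takes as input Boolean sharings $(\mathbf{x}_i)$, $(\mathbf{y}_i)$ of vectors $\mathbf{x},\mathbf{y}\in\mathbb{F}_q^l$ and a Boolean sharing $(c_i)$ of $c\in\mathbb{F}_q$, and computes: for $j=1,\dots,l$: $(\mathbf{t}[j]_i):=\mathtt{SecMult}((\mathbf{x}[j]_i),(c_i))$ and $\mathbf{z}[j]_i:=\mathbf{y}[j]_i-\mathbf{t}[j]_i$ for every $i$. It returns $(\mathbf{z}_i)$.
   Context: A Boolean sharing of $x\in\mathbb{F}_q$ is a tuple $(x_1,\dots,x_n)$ with $x=x_1+\cdots+x_n$ (field addition); vectors are shared coordinate-wise, and $\mathbf{v}[j]$ is the $j$-th coordinate. $\mathtt{SecMult}$ is the ISW masked multiplication gadget, taking Boolean sharings of $a,b\in\mathbb{F}_q$ and returning a Boolean sharing of $a\cdot b$; it is $t$-SNI. Probing model: an adversary may place probes on intermediate values (internal wires) of a gadget and on its output shares. A gadget with one output sharing and some input sharings is $t$-NI (resp. $t$-SNI) secure if any set of at most $t_1$ probes on internal wires and $t_2$ probes on output shares, with $t_1+t_2\le t$, can be perfectly simulated using at most $t_1+t_2$ (resp. $t_1$) shares of each of its input sharings. *)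

From HB Require Import structures.
From mathcomp Require Import all_boot all_order all_algebra.
Set Implicit Arguments. Unset Strict Implicit. Unset Printing Implicit Defensive.
Import GRing.Theory.
Local Open Scope ring_scope.

(* A gadget has input sharings indexed by a finite type K; sharing k     *)
(* consists of n shares with values in V k.  The gadget draws its        *)
(* internal randomness uniformly from the finite type Rnd.  Its internal *)
(* wires are indexed by the finite type W (values in F), and its output  *)
(* sharing has n shares with values in O.                                *)

Definition sharing_input (K : finType) (V : K -> Type) (n : nat) :=
  forall k : K, 'I_n -> V k.

Definition view (K : finType) (V : K -> Type) (n : nat)
    (I : K -> {set 'I_n}) (inp : sharing_input V n) :
    forall k : K, 'I_n -> option (V k) :=
  fun k i => if i \in I k then Some (inp k i) else None.

Definition observation (W : finType) (F O : Type) (n : nat) : Type :=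
  ({ffun W -> option F} * {ffun 'I_n -> option O})%type.

Definition observe (Rnd W : finType) (F O : Type) (n : nat)
    (wire : Rnd -> W -> F) (out : Rnd -> 'I_n -> O)
    (P : {set W}) (Q : {set 'I_n}) (r : Rnd) : observation W F O n :=
  ([ffun w => if w \in P then Some (wire r w) else None],
   [ffun i => if i \in Q then Some (out r i) else None]).

Definition same_dist (A B : finType) (T : eqType) (f : A -> T) (g : B -> T) : Prop :=
  forall o : T,
    (#|[pred a | f a == o]|%:R / #|A|%:R : rat) = #|[pred b | g b == o]|%:R / #|B|%:R.

Definition NI_secure (t : nat) (K : finType) (V : K -> Type) (n : nat)
    (Rnd W : finType) (F O : eqType)
    (wire : sharing_input V n -> Rnd -> W -> F)
    (out : sharing_input V n -> Rnd -> 'I_n -> O) : Prop :=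
  forall (P : {set W}) (Q : {set 'I_n}), (#|P| + #|Q| <= t)%N ->
  exists I : K -> {set 'I_n},
    (forall k, #|I k| <= #|P| + #|Q|)%N /\
    exists (S : finType)
           (Sim : (forall k : K, 'I_n -> option (V k)) -> S -> observation W F O n),
      forall inp : sharing_input V n,
        same_dist (observe (wire inp) (out inp) P Q) (Sim (view I inp)).

Definition upair (n : nat) := {p : 'I_n * 'I_n | (p.1 < p.2)%N}.

Definition isw_rnd (F : finFieldType) (n : nat) := {ffun upair n -> F}.

(* wires: a_i | b_i | a_i*b_j | r_ij (i<j) | a_i b_j - r_ij (i<j)
   | r_ji := (a_i b_j - r_ij) + a_j b_i (i<j) | partial sums s_{i,k} *)
Definition isw_wire (n : nat) :=
  ('I_n + 'I_n + ('I_n * 'I_n) + upair n + upair n + upair n + ('I_n * 'I_n.+1))%type.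

Section ISW.
Variables (F : finFieldType) (n : nat).
Implicit Types (a b : 'I_n -> F) (r : isw_rnd F n).

Definition isw_u a b r (p : upair n) : F := a (val p).1 * b (val p).2 - r p.
Definition isw_rji a b r (p : upair n) : F := isw_u a b r p + a (val p).2 * b (val p).1.

(* the summand r_ij used in c_i *)
Definition isw_R a b r (i j : 'I_n) : F :=
  match (insub (i, j) : option (upair n)) with
  | Some p => r p
  | None => match (insub (j, i) : option (upair n)) with
            | Some p => isw_rji a b r p
            | None => 0
            end
  end.

Definition isw_psum a b r (i : 'I_n) (k : 'I_n.+1) : F :=
  a i * b i + \sum_(j < n | (j < k)%N && (j != i)) isw_R a b r i j.

Definition isw_out a b r (i : 'I_n) : F := isw_psum a b r i ord_max.

Definition isw_wire_val a b r (w : isw_wire n) : F :=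
  match w with
  | inl (inl (inl (inl (inl (inl i))))) => a i
  | inl (inl (inl (inl (inl (inr i))))) => b i
  | inl (inl (inl (inl (inr (i, j))))) => a i * b j
  | inl (inl (inl (inr p))) => r p
  | inl (inl (inr p)) => isw_u a b r p
  | inl (inr p) => isw_rji a b r p
  | inr (i, k) => isw_psum a b r i k
  end.

End ISW.

(* Input sharing index: Some false = x, Some true = y, None = c.         *)

Definition sms_V (F : finFieldType) (l : nat) (k : option bool) : Type :=
  match k with Some _ => 'rV[F]_l | None => (F : Type) end.

Section SecMultSub.
Variables (F : finFieldType) (l n : nat).

Definition sms_input := sharing_input (sms_V F l) n.

Definition sms_x (inp : sms_input) (j : 'I_l) (i : 'I_n) : F :=
  (inp (Some false) i : 'rV[F]_l) 0 j.
Definition sms_y (inp : sms_input) (j : 'I_l) (i : 'I_n) : F :=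
  (inp (Some true) i : 'rV[F]_l) 0 j.
Definition sms_c (inp : sms_input) (i : 'I_n) : F := (inp None i : F).

Definition sms_rnd := {ffun 'I_l -> isw_rnd F n}.

(* wires: those of the j-th SecMult | y[j]_i | z[j]_i *)
Definition sms_wire := (('I_l * isw_wire n) + ('I_l * 'I_n) + ('I_l * 'I_n))%type.

Definition sms_t inp (r : sms_rnd) (j : 'I_l) (i : 'I_n) : F :=
  isw_out (sms_x inp j) (sms_c inp) (r j) i.

Definition sms_z inp (r : sms_rnd) (j : 'I_l) (i : 'I_n) : F :=
  sms_y inp j i - sms_t inp r j i.

Definition sms_wire_val inp (r : sms_rnd) (w : sms_wire) : F :=
  match w with
  | inl (inl (j, v)) => isw_wire_val (sms_x inp j) (sms_c inp) (r j) v
  | inl (inr (j, i)) => sms_y inp j i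
  | inr (j, i) => sms_z inp r j i
  end.

Definition sms_out inp (r : sms_rnd) (i : 'I_n) : 'rV[F]_l :=
  \row_j sms_z inp r j i.

End SecMultSub.

From HB Require Import structures.
From mathcomp Require Import all_boot all_order all_algebra.
From mathcomp Require Import ring.
Set Implicit Arguments. Unset Strict Implicit. Unset Printing Implicit Defensive.
Import GRing.Theory.
Local Open Scope ring_scope.

(* The simulator runs the gadget on the probed input shares padded with
   zeros.  For the true input and any padded input agreeing with it on the
   chosen shares, a translation of the randomness of each SecMult call maps
   the adversary's view of the one onto the view of the other; translations
   are bijective, so both views are identically distributed.  The
   translation follows the ISW proof: the rows Z of r_ij that are probed
   directly are left untouched, every other pair absorbs the difference of
   the partial products, and every observed output row outside Z is balanced
   through the column of an index f that is neither probed nor observed; f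
   exists because fewer than n = t+1 probes are placed. *)

Section Relabelling.
Variables (t : nat) (K : finType) (V : K -> Type) (n : nat).
Variables (Rnd W : finType) (F O : eqType).
Variables (wire : sharing_input V n -> Rnd -> W -> F).
Variables (out : sharing_input V n -> Rnd -> 'I_n -> O).

Lemma same_dist_relabel (T : eqType) (f g : Rnd -> T) (h : Rnd -> Rnd) :
  injective h -> (forall r, f (h r) = g r) -> same_dist f g.
Proof.
move=> h_inj fhg o.
apply: (congr1 (fun m : nat => (m%:R / #|Rnd|%:R : rat))).
rewrite -[RHS](@eq_card _ (h @^-1: [set r | f r == o])) => [|r]; last first.
  by rewrite !inE fhg.
by rewrite card_preimset // cardsE.
Qed.

Definition pad (dflt : forall k, V k) (v : forall k, 'I_n -> option (V k)) :
  sharing_input V n := fun k i => odflt (dflt k) (v k i).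

Lemma pad_view dflt (I : K -> {set 'I_n}) inp k :
  {in I k, pad dflt (view I inp) k =1 inp k}.
Proof. by move=> i iI; rewrite /pad /view iI. Qed.

Lemma NI_secure_by_relabelling (dflt : forall k, V k) :
  (forall (P : {set W}) (Q : {set 'I_n}), (#|P| + #|Q| <= t)%N ->
    exists2 I : K -> {set 'I_n}, (forall k, #|I k| <= #|P| + #|Q|)%N &
      forall inp inp' : sharing_input V n, (forall k, {in I k, inp k =1 inp' k}) ->
      exists2 h : Rnd -> Rnd, injective h &
        forall r, observe (wire inp) (out inp) P Q (h r)
                  = observe (wire inp') (out inp') P Q r) ->
  NI_secure t wire out.
Proof.
move=> relabel P Q PQt; have [I cardI simI] := relabel P Q PQt.
exists I; split=> //; exists Rnd.
exists (fun v => observe (wire (pad dflt v)) (out (pad dflt v)) P Q) => inp.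
have [|h h_inj obs_h] := simI inp (pad dflt (view I inp)).
  by move=> k i iI; rewrite pad_view.
exact: same_dist_relabel h_inj obs_h.
Qed.

End Relabelling.

Section ISWWireIndices.
Variable n : nat.
Implicit Types (Z O : {set 'I_n}) (p : upair n) (w : isw_wire n).

Definition isw_row w : 'I_n :=
  match w with
  | inl (inl (inl (inl (inl (inl i))))) => i
  | inl (inl (inl (inl (inl (inr i))))) => i
  | inl (inl (inl (inl (inr (i, _))))) => i
  | inl (inl (inl (inr p))) => (val p).1
  | inl (inl (inr p)) => (val p).1
  | inl (inr p) => (val p).2
  | inr (i, _) => i
  end.

(* Probes of r_ij, r_ji and s_{i,k} reveal randomness of row isw_row w,
   which is therefore put in Z. *)
Definition isw_zprobe w : bool :=
  match w with
  | inl (inl (inl (inr _))) | inl (inr _) | inr _ => true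
  | _ => false
  end.

(* When only row j of i < j lies in Z, the correction of r_ij cancels
   a_j b_i, so u_ij = a_i b_j - r_ij needs the share b_i instead of b_j. *)
Definition isw_u_bshare Z p : 'I_n :=
  if ((val p).2 \in Z) && ((val p).1 \notin Z) then (val p).1 else (val p).2.

(* u_ij is unaffected by the balancing through column f as long as f differs
   from this index. *)
Definition isw_u_avoid O p : 'I_n :=
  if (val p).1 \in O then (val p).2 else (val p).1.

Definition isw_bshare Z w : 'I_n :=
  match w with
  | inl (inl (inl (inl (inr (_, j))))) => j
  | inl (inl (inr p)) => isw_u_bshare Z p
  | _ => isw_row w
  end.

Definition isw_avoid O w : 'I_n :=
  if w is inl (inl (inr p)) then isw_u_avoid O p else isw_row w.

Lemma isw_bshare_zprobe Z w : isw_zprobe w -> isw_bshare Z w = isw_row w.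
Proof. by case: w => [[[[[[?|?]|[? ?]]|?]|?]|?]|[? ?]]. Qed.

Lemma isw_avoid_zprobe O w : isw_zprobe w -> isw_avoid O w = isw_row w.
Proof. by case: w => [[[[[[?|?]|[? ?]]|?]|?]|?]|[? ?]]. Qed.

End ISWWireIndices.

Section ISWShift.
Variables (F : finFieldType) (n : nat).

Definition isw_shift (e : 'I_n -> 'I_n -> F) (r : isw_rnd F n) : isw_rnd F n :=
  [ffun p => r p + e (val p).1 (val p).2].

Lemma isw_shift_inj e : injective (isw_shift e).
Proof.
move=> r1 r2 /ffunP eq_r; apply/ffunP => p.
by have := eq_r p; rewrite !ffunE => /addIr.
Qed.

Variables (a b a' b' : 'I_n -> F).

Definition isw_gap (p q : 'I_n) : F := a' p * b' q - a p * b q.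

Lemma isw_gap_eq0 p q : a p = a' p -> b q = b' q -> isw_gap p q = 0.
Proof. by move=> ap bq; rewrite /isw_gap ap bq subrr. Qed.

Variable e : 'I_n -> 'I_n -> F.
Hypothesis e_antisym :
  forall p q, p != q -> e p q + e q p = - (isw_gap p q + isw_gap q p).

Lemma isw_R_shift r i q :
  i != q -> isw_R a b (isw_shift e r) i q = isw_R a' b' r i q + e i q.
Proof.
move=> neq_iq; rewrite /isw_R.
case: insubP => [p _ val_p | not_lt_iq]; first by rewrite ffunE val_p.
case: insubP => [p _ val_p | not_lt_qi].
  have e_qi : e q i = - (isw_gap i q + isw_gap q i) - e i q.
    by rewrite -e_antisym // addrC addKr.
  by rewrite /isw_rji /isw_u ffunE val_p /= e_qi /isw_gap; ring.
move: not_lt_iq not_lt_qi; rewrite /= -!leqNgt => le_qi le_iq.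
by case/eqP: neq_iq; apply/val_inj/anti_leq; rewrite le_iq le_qi.
Qed.

Lemma isw_psum_shift r i k :
  isw_psum a b (isw_shift e r) i k =
  isw_psum a' b' r i k - isw_gap i i + \sum_(q < n | (q < k)%N && (q != i)) e i q.
Proof.
rewrite /isw_psum (eq_bigr (fun q => isw_R a' b' r i q + e i q)); last first.
  by move=> q /andP[_ neq_qi]; rewrite isw_R_shift // eq_sym.
by rewrite big_split /= /isw_gap; ring.
Qed.

End ISWShift.

Section ISWRelabel.
Variables (F : finFieldType) (n : nat) (a b a' b' : 'I_n -> F).
Variables (Z O : {set 'I_n}) (f : 'I_n).
Hypotheses (fZ : f \notin Z) (fO : f \notin O).
Hypotheses (ZA : {in Z, a =1 a'}) (ZB : {in Z, b =1 b'}).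
Local Notation D := (isw_gap a b a' b').

Definition isw_corr0 (p q : 'I_n) : F :=
  if p \in Z then 0 else if q \in Z then - (D p q + D q p) else - D p q.

Definition isw_row_defect (o : 'I_n) : F := D o o - \sum_(q < n | q != o) isw_corr0 o q.

(* isw_corr0 leaves the rows in Z untouched and lets every pair outside Z
   absorb the gap of the partial products; the two extra terms then balance
   each observed row outside Z through column f. *)
Definition isw_corr (p q : 'I_n) : F :=
  isw_corr0 p q
  + (if (q == f) && (p \in O) && (p \notin Z) then isw_row_defect p else 0)
  - (if (p == f) && (q \in O) && (q \notin Z) then isw_row_defect q else 0).

Definition isw_relabel : isw_rnd F n -> isw_rnd F n := isw_shift isw_corr.

Lemma isw_gapZ p q : p \in Z -> q \in Z -> D p q = 0.
Proof. by move=> pZ qZ; rewrite isw_gap_eq0 ?ZA ?ZB. Qed.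

Lemma isw_corr_antisym p q : isw_corr p q + isw_corr q p = - (D p q + D q p).
Proof.
have corr0_antisym : isw_corr0 p q + isw_corr0 q p = - (D p q + D q p).
  rewrite /isw_corr0; case: (boolP (p \in Z)) => pZ; case: (boolP (q \in Z)) => qZ;
  by rewrite ?(isw_gapZ pZ qZ) ?(isw_gapZ qZ pZ); ring.
by rewrite /isw_corr -corr0_antisym; ring.
Qed.

Lemma neq_fZ p : p \in Z -> (p == f) = false.
Proof. by move=> pZ; apply: contraTF pZ => /eqP ->. Qed.

Lemma isw_corrZl p q : p \in Z -> isw_corr p q = 0.
Proof. by move=> pZ; rewrite /isw_corr /isw_corr0 pZ (neq_fZ pZ) /= ?andbF; ring. Qed.

Lemma isw_corrZr p q : p \notin Z -> q \in Z -> isw_corr p q = - (D p q + D q p).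
Proof.
move=> pZ qZ; rewrite /isw_corr /isw_corr0 (negbTE pZ) qZ (neq_fZ qZ) /=.
by rewrite ?andbF; ring.
Qed.

Lemma isw_corr_free p q : p \notin Z -> q \notin Z ->
  ~~ ((q == f) && (p \in O)) -> ~~ ((p == f) && (q \in O)) -> isw_corr p q = - D p q.
Proof.
move=> pZ qZ /negbTE fq /negbTE fp.
by rewrite /isw_corr /isw_corr0 (negbTE pZ) (negbTE qZ) fq fp /=; ring.
Qed.

Lemma sum_isw_corrO o :
  o \notin Z -> o \in O -> \sum_(q < n | q != o) isw_corr o q = D o o.
Proof.
move=> oZ oO; have of_ : (o == f) = false by apply: contraNF fO => /eqP <-.
rewrite (eq_bigr (fun q => isw_corr0 o q + (if q == f then isw_row_defect o else 0)))
  => [|q _]; last first.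
  by rewrite /isw_corr of_ oO oZ /= !andbT; ring.
rewrite big_split /= -big_mkcondr /=.
have -> : \sum_(q < n | (q != o) && (q == f)) isw_row_defect o = isw_row_defect o.
  rewrite (big_pred1 f) // => q.
  by apply/andP/eqP => [[_ /eqP] | ->] //; rewrite eq_sym of_.
by rewrite /isw_row_defect; ring.
Qed.

Lemma isw_relabel_psum r i k :
  i \in Z -> isw_psum a b (isw_relabel r) i k = isw_psum a' b' r i k.
Proof.
move=> iZ; rewrite (isw_psum_shift (fun p q _ => isw_corr_antisym p q)).
by rewrite big1 => [|q _]; rewrite ?isw_corrZl ?isw_gapZ //; ring.
Qed.

Lemma isw_relabel_out r i :
  (i \in Z) || (i \in O) -> isw_out a b (isw_relabel r) i = isw_out a' b' r i.
Proof.
case: (boolP (i \in Z)) => [iZ _ | iZ /= iO]; first exact: isw_relabel_psum.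
rewrite /isw_out (isw_psum_shift (fun p q _ => isw_corr_antisym p q)).
rewrite (eq_bigl (fun q => q != i)) => [|q]; last by rewrite ltn_ord.
by rewrite sum_isw_corrO //; ring.
Qed.

Lemma isw_relabel_rnd r p : (val p).1 \in Z -> isw_relabel r p = r p.
Proof. by move=> p1Z; rewrite ffunE isw_corrZl ?addr0. Qed.

Lemma isw_relabel_rji r p :
  (val p).2 \in Z -> isw_rji a b (isw_relabel r) p = isw_rji a' b' r p.
Proof.
move=> p2Z; have corr_p : isw_corr (val p).1 (val p).2 =
    - (D (val p).1 (val p).2 + D (val p).2 (val p).1).
  have [p1Z|p1Z] := boolP ((val p).1 \in Z); last exact: isw_corrZr.
  by rewrite isw_corrZl // !isw_gapZ // addr0 oppr0.
by rewrite /isw_rji /isw_u ffunE corr_p /isw_gap; ring.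
Qed.

Lemma isw_relabel_u r p :
    a (val p).1 = a' (val p).1 -> b (isw_u_bshare Z p) = b' (isw_u_bshare Z p) ->
    f != isw_u_avoid O p ->
  isw_u a b (isw_relabel r) p = isw_u a' b' r p.
Proof.
case: p => [[i j] ?]; rewrite /isw_u_bshare /isw_u_avoid /= => ai bp f_avoid.
suff corr_ij : isw_corr i j = - D i j by rewrite /isw_u ffunE /= corr_ij /isw_gap; ring.
have [iZ|iZ] := boolP (i \in Z).
  by rewrite iZ andbF in bp; rewrite isw_corrZl // isw_gap_eq0 ?oppr0.
have [jZ|jZ] := boolP (j \in Z).
  by rewrite iZ jZ in bp; rewrite isw_corrZr // (isw_gap_eq0 (ZA jZ) bp) addr0.
apply: isw_corr_free => //; apply/negP => /andP[/eqP eq_f inO].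
  by rewrite inO eq_f eqxx in f_avoid.
by move: f_avoid fO; rewrite -eq_f; case: (i \in O); rewrite ?eqxx.
Qed.

Lemma isw_relabel_wire r w :
    a (isw_row w) = a' (isw_row w) -> b (isw_bshare Z w) = b' (isw_bshare Z w) ->
    (isw_zprobe w -> isw_row w \in Z) -> f != isw_avoid O w ->
  isw_wire_val a b (isw_relabel r) w = isw_wire_val a' b' r w.
Proof.
case: w => [[[[[[i|i]|[i j]]|p]|p]|p]|[i k]] /= ai bi zZ f_avoid //.
- by rewrite ai bi.
- by rewrite isw_relabel_rnd ?zZ.
- exact: isw_relabel_u.
- by rewrite isw_relabel_rji ?zZ.
- by rewrite isw_relabel_psum ?zZ.
Qed.

End ISWRelabel.

Lemma leq_card_imsetU (aT rT : finType) (g : aT -> rT) (A : {set aT}) (B : {set rT}) :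
  (#|g @: A :|: B| <= #|A| + #|B|)%N.
Proof.
exact: leq_trans (leq_card_setU _ _) (leq_add (leq_imset_card _ _) (leqnn _)).
Qed.

Lemma exists_notin (T : finType) (A : {set T}) :
  (#|A| < #|T|)%N -> exists x, x \notin A.
Proof.
move=> ltAT; have : (0 < #|~: A|)%N by rewrite -(ltn_add2l #|A|) cardsC addn0.
by case/card_gt0P => x; rewrite inE; exists x.
Qed.

Section SecMultSubProbing.
Variables (F : finFieldType) (l n : nat).
Variables (P : {set sms_wire l n}) (Q : {set 'I_n}).
Implicit Types (j : 'I_l) (w : sms_wire l n).

Definition sms_row w : 'I_n :=
  match w with
  | inl (inl (_, v)) => isw_row v
  | inl (inr (_, i)) | inr (_, i) => i
  end.

Definition sms_zprobe j w : bool :=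
  if w is inl (inl (j', v)) then (j' == j) && isw_zprobe v else false.

Definition sms_Z j : {set 'I_n} := sms_row @: [set w in P | sms_zprobe j w].

Definition sms_O j : {set 'I_n} := Q :|: [set i | inr (j, i) \in P].

Definition sms_bshare w : 'I_n :=
  if w is inl (inl (j, v)) then isw_bshare (sms_Z j) v else sms_row w.

Definition sms_avoid j w : 'I_n :=
  if w is inl (inl (_, v)) then isw_avoid (sms_O j) v else sms_row w.

Definition sms_forbidden j : {set 'I_n} := sms_avoid j @: P :|: Q.

Definition sms_idx (k : option bool) : {set 'I_n} :=
  match k with
  | Some false => sms_row @: P
  | Some true => sms_row @: P :|: Q
  | None => sms_bshare @: P
  end.

Lemma card_sms_idx k : (#|sms_idx k| <= #|P| + #|Q|)%N.
Proof.
case: k => [[]|] /=; first exact: leq_card_imsetU.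
all: exact: leq_trans (leq_imset_card _ _) (leq_addr _ _).
Qed.

Lemma card_sms_forbidden j : (#|sms_forbidden j| <= #|P| + #|Q|)%N.
Proof. exact: leq_card_imsetU. Qed.

Lemma sms_ZP j i :
  reflect (exists2 w, w \in P & sms_zprobe j w /\ i = sms_row w) (i \in sms_Z j).
Proof.
apply: (iffP imsetP) => [[w] | [w wP [zw ->]]]; last by exists w; rewrite // inE wP.
by rewrite inE => /andP[wP zw] ->; exists w.
Qed.

Lemma sms_Z_idx_x j : {subset sms_Z j <= sms_idx (Some false)}.
Proof. by move=> _ /sms_ZP[w wP [_ ->]]; apply: imset_f. Qed.

Lemma sms_Z_idx_c j : {subset sms_Z j <= sms_idx None}.
Proof.
move=> _ /sms_ZP[w wP [zw ->]]; have <- : sms_bshare w = sms_row w; last exact: imset_f.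
by case: w zw {wP} => [[[j' v] /= /andP[_ /isw_bshare_zprobe ->]|//]|//].
Qed.

Lemma sms_Z_forbidden j : {subset sms_Z j <= sms_forbidden j}.
Proof.
move=> _ /sms_ZP[w wP [zw ->]]; have <- : sms_avoid j w = sms_row w.
  by case: w zw {wP} => [[[j' v] /= /andP[_ /isw_avoid_zprobe ->]|//]|//].
by rewrite inE imset_f.
Qed.

Lemma sms_O_forbidden j : {subset sms_O j <= sms_forbidden j}.
Proof.
move=> i; rewrite !inE => /orP[-> | zP]; rewrite ?orbT //.
by rewrite (imset_f (sms_avoid j) zP).
Qed.

Variables (inp inp' : sms_input F l n) (f : 'I_l -> 'I_n).
Hypothesis agree : forall k, {in sms_idx k, inp k =1 inp' k}.
Hypothesis f_hidden : forall j, f j \notin sms_forbidden j.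

Lemma sms_agree_x j : {in sms_idx (Some false), sms_x inp j =1 sms_x inp' j}.
Proof. by move=> i iI; rewrite /sms_x (agree iI). Qed.

Lemma sms_agree_y j : {in sms_idx (Some true), sms_y inp j =1 sms_y inp' j}.
Proof. by move=> i iI; rewrite /sms_y (agree iI). Qed.

Lemma sms_agree_c : {in sms_idx None, sms_c inp =1 sms_c inp'}.
Proof. by move=> i iI; rewrite /sms_c (agree iI). Qed.

Lemma sms_f_notin_Z j : f j \notin sms_Z j.
Proof. exact: contra (@sms_Z_forbidden j _) (f_hidden j). Qed.

Lemma sms_f_notin_O j : f j \notin sms_O j.
Proof. exact: contra (@sms_O_forbidden j _) (f_hidden j). Qed.

Lemma sms_agree_xZ j : {in sms_Z j, sms_x inp j =1 sms_x inp' j}.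
Proof. by move=> i /sms_Z_idx_x; apply: sms_agree_x. Qed.

Lemma sms_agree_cZ j : {in sms_Z j, sms_c inp =1 sms_c inp'}.
Proof. by move=> i /sms_Z_idx_c; apply: sms_agree_c. Qed.

Definition sms_relabel (r : sms_rnd F l n) : sms_rnd F l n :=
  [ffun j => isw_relabel (sms_x inp j) (sms_c inp) (sms_x inp' j) (sms_c inp')
                         (sms_Z j) (sms_O j) (f j) (r j)].

Lemma sms_relabel_inj : injective sms_relabel.
Proof.
move=> r1 r2 /ffunP eq_r; apply/ffunP => j.
by have := eq_r j; rewrite !ffunE => /isw_shift_inj.
Qed.

Lemma sms_relabel_z r j i : i \in sms_idx (Some true) -> i \in sms_O j ->
  sms_z inp (sms_relabel r) j i = sms_z inp' r j i.
Proof.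
move=> iy iO; rewrite /sms_z /sms_t ffunE sms_agree_y //.
by rewrite (isw_relabel_out (sms_f_notin_Z j) (sms_f_notin_O j)
             (@sms_agree_xZ j) (@sms_agree_cZ j)) ?iO ?orbT.
Qed.

Lemma sms_relabel_wire r w : w \in P ->
  sms_wire_val inp (sms_relabel r) w = sms_wire_val inp' r w.
Proof.
move=> wP; have aP : sms_row w \in sms_row @: P by apply: imset_f.
case: w wP aP => [[[j v]|[j i]]|[j i]] wP aP /=.
- rewrite ffunE (isw_relabel_wire (sms_f_notin_Z j) (sms_f_notin_O j)
                  (@sms_agree_xZ j) (@sms_agree_cZ j)) //.
  + exact: sms_agree_x.
  + by apply: sms_agree_c; apply: (imset_f sms_bshare wP).
  + by move=> zv; apply/sms_ZP; exists (inl (inl (j, v))); rewrite //= eqxx.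
  + apply: contraNneq (f_hidden j) => ->.
    by rewrite inE (imset_f (sms_avoid j) wP).
- by apply: sms_agree_y; rewrite inE aP.
- by apply: sms_relabel_z; rewrite !inE ?aP ?wP ?orbT.
Qed.

Lemma sms_relabel_out r i : i \in Q ->
  sms_out inp (sms_relabel r) i = sms_out inp' r i.
Proof. by move=> iQ; apply/rowP => j; rewrite !mxE sms_relabel_z // !inE iQ ?orbT. Qed.

Lemma observe_sms_relabel r :
  observe (sms_wire_val inp) (sms_out inp) P Q (sms_relabel r)
  = observe (sms_wire_val inp') (sms_out inp') P Q r.
Proof.
congr pair; apply/ffunP => w; rewrite !ffunE; case: ifP => // wP.
  by rewrite sms_relabel_wire.
by rewrite sms_relabel_out.
Qed.

End SecMultSubProbing.

Definition sms_dflt (F : finFieldType) (l : nat) (k : option bool) : sms_V F l k :=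
  match k return sms_V F l k with Some _ => (0 : 'rV[F]_l) | None => (0 : F) end.

Theorem lemma3 (F : finFieldType) (t l : nat) (ht : (1 <= t)%N) :
  @NI_secure t _ (sms_V F l) t.+1 (sms_rnd F l t.+1) (sms_wire l t.+1) F
    ('rV[F]_l) (@sms_wire_val F l t.+1) (@sms_out F l t.+1).
Proof.
apply: (NI_secure_by_relabelling (sms_dflt F l)) => P Q PQt.
exists (sms_idx P Q) => [k | inp inp' agree]; first exact: card_sms_idx.
have /fin_all_exists[f f_hidden] :
    forall j, exists i : 'I_t.+1, i \notin sms_forbidden P Q j.
  move=> j; apply: exists_notin.
  by rewrite card_ord ltnS (leq_trans (card_sms_forbidden _ _ _)).
exists (sms_relabel P Q inp inp' f); first exact: sms_relabel_inj.
exact: observe_sms_relabel agree f_hidden.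
Qed.
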